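(* Consider the discrete-time system $x(t+1)=f(x(t),u(t))$ with $f\in\mathbb{R}[x,u]^n$, $x\in\mathbb{R}^n$, $u\in\mathbb{R}^m$, and the nonempty constraint set $\mathbb{P}=\{(x,u)\in\mathbb{R}^n\times\mathbb{R}^m: p_i(x,u)\leq 0,\ i=1,\dots,c\}$ with $p_i\in\mathbb{R}[x,u]$. Let $z\in\mathbb{R}[x,u]^\ell$ be a known vector of polynomials such that $f(x,u)=Az(x,u)=Z(x,u)a$ for some (unknown) $A\in\mathbb{R}^{n\times\ell}$, where $Z(x,u)=I_n\otimes z(x,u)^T$ and $a=\mathrm{vec}(A^T)\in\mathbb{R}^{n\ell}$. Let data $(\tilde{x}_i^+,\tilde{x}_i,\tilde{u}_i)$, $i=1,\dots,D$, satisfy $\tilde{x}_i^+=f(\tilde{x}_i,\tilde{u}_i)+\tilde{d}_i$ with $\tilde{d}_i\in\mathcal{D}_i^{\mathrm{SB}}=\{d\in\mathbb{R}^n:\delta_i(d)\leq 0\}$, where $\delta_i\in\mathbb{R}[d]$ and each $\mathcal{D}_i^{\mathrm{SB}}$ is bounded. Let $s\in\mathbb{R}[x,u]$ be a given supply rate. Suppose there exist $\lambda\in\mathrm{SOS}[x]$, $s_i\in\mathrm{SOS}[x,u,a]$ for $i=1,\dots,c$, and $t_i\in\mathrm{SOS}[x,u,a]$ for $i=1,\dots,D$ such that $\psi\in\mathrm{SOS}[x,u,a]$, where \[\psi(x,u,a)=s(x,u)-\lambda(Z(x,u)a)+\lambda(x)+\sum_{i=1}^{D}\delta_i(\tilde{x}_i^+-Z(\tilde{x}_i,\tilde{u}_i)a)\,t_i(x,u,a)+\sum_{i=1}^{c}p_i(x,u)\,s_i(x,u,a)\]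 (viewed as a polynomial in the variables $x,u,a$). Then the system is dissipative on $\mathbb{P}$ with respect to the supply rate $s$.
   Context: A polynomial matrix $P\in\mathbb{R}[x]^{r\times r}$ of even degree is an SOS matrix if $P=Q^TQ$ for some polynomial matrix $Q\in\mathbb{R}[x]^{s\times r}$; $\mathrm{SOS}[x]^{r\times r}$ denotes the set of such matrices, and for $r=1$ one writes $\mathrm{SOS}[x]$ for SOS polynomials. $\mathrm{vec}$ stacks the columns of a matrix; $\otimes$ is the Kronecker product. Dissipativity: the system $x(t+1)=f(x,u)$ is dissipative on $\mathbb{P}$ with respect to a supply rate $s:\mathbb{P}\to\mathbb{R}$ if there exists a continuous storage function $\lambda:\mathbb{X}\to\mathbb{R}_{\geq 0}$ with $\lambda(f(x,u))-\lambda(x)\leq s(x,u)$ for all $(x,u)\in\mathbb{P}$, where $\mathbb{X}$ is the projection of $\mathbb{P}$ onto $\mathbb{R}^n$. *)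

From HB Require Import structures.
From mathcomp Require Import all_boot all_order all_algebra.
From mathcomp Require Import mpoly.
From mathcomp Require Import reals.
Set Implicit Arguments. Unset Strict Implicit. Unset Printing Implicit Defensive.
Import Order.TTheory GRing.Theory Num.Theory.
Local Open Scope ring_scope.

Definition sos (R : comRingType) (k : nat) (p : {mpoly R[k]}) : Prop :=
  exists qs : seq {mpoly R[k]}, p = \sum_(q <- qs) q ^+ 2.

(* Concatenation of the state x in R^n and input u in R^m into a point of
   R^(n+m), the variables of R[x,u] being ordered (x_1..x_n,u_1..u_m). *)
Definition xu (R : Type) (n m : nat) (x : 'I_n -> R) (u : 'I_m -> R)
  : 'I_(n + m) -> R :=
  fun k => match split k with inl i => x i | inr j => u j end.

(* Variables of R[x,u,a], ordered (x, u, a) with a in R^(n*l):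
   'I_(n + m + n * l). *)
Section Vars.
Variables (R : comRingType) (n m l : nat).
Local Notation N := (n + m + n * l)%N.
Definition Xvar (i : 'I_n) : {mpoly R[N]} := 'X_(lshift (n * l) (lshift m i)).
Definition Uvar (j : 'I_m) : {mpoly R[N]} := 'X_(lshift (n * l) (rshift n j)).
(* a = vec(A^T) : its entry A i j sits at index mxvec_index i j
   (mxvec stacks the rows of A, i.e. the columns of A^T). *)
Definition Avar (i : 'I_n) (j : 'I_l) : {mpoly R[N]} :=
  'X_(rshift (n + m) (mxvec_index i j)).

Definition lift_xu (p : {mpoly R[n + m]}) : {mpoly R[N]} :=
  p \mPo [tuple match split k with inl i => Xvar i | inr j => Uvar j end
          | k < (n + m)%N].
Definition lift_x (p : {mpoly R[n]}) : {mpoly R[N]} :=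
  p \mPo [tuple Xvar i | i < n].

(* (Z(x,u) a) as a vector of polynomials in (x,u,a), with
   Z(x,u) = I_n (x) z(x,u)^T :  (Z a)_i = sum_j z_j(x,u) a_{(i,j)}. *)
Definition Za (z : 'I_l -> {mpoly R[n + m]}) : n.-tuple {mpoly R[N]} :=
  [tuple \sum_(j < l) lift_xu (z j) * Avar i j | i < n].

Definition data_res (z : 'I_l -> {mpoly R[n + m]}) (xp xt : 'I_n -> R)
  (ut : 'I_m -> R) : n.-tuple {mpoly R[N]} :=
  [tuple (xp i)%:MP - \sum_(j < l) ((z j).@[xu xt ut])%:MP * Avar i j | i < n].
End Vars.

Definition dissipative (R : realType) (n m : nat)
  (f : ('I_n -> R) -> ('I_m -> R) -> ('I_n -> R))
  (P : ('I_n -> R) -> ('I_m -> R) -> Prop)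
  (s : ('I_n -> R) -> ('I_m -> R) -> R) : Prop :=
  let X := fun x => exists u, P x u in
  exists lam : ('I_n -> R) -> R,
    [/\ (forall x, X x -> forall e : R, 0 < e -> exists2 d : R, 0 < d &
           forall y, X y -> (forall k, `|y k - x k| < d) -> `|lam y - lam x| < e),
        (forall x, X x -> 0 <= lam x) &
        (forall x u, P x u -> lam (f x u) - lam x <= s x u)].

From HB Require Import structures.
From mathcomp Require Import all_boot all_order all_algebra.
From mathcomp Require Import mpoly.
From mathcomp Require Import reals.
From mathcomp Require Import ring lra.
Import Order.TTheory GRing.Theory Num.Theory.
Local Open Scope ring_scope.

(* The storage function is the SOS polynomial lam itself.  It is nonnegative
   because an SOS polynomial evaluates to a sum of squares, and continuous
   because every polynomial function is continuous for the max-norm (built up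
   from constants and coordinates by sums and products).  For the dissipation
   inequality, fix (x,u) in P and evaluate the certificate psi at the point
   (x, u, vec(A^T)) of the true system matrix:
   - lam(Z(x,u) vec(A^T)) is lam(f(x,u)) since f = A z;
   - the data residual x~_i^+ - Z(x~_i,u~_i) vec(A^T) is the true noise d~_i,
     so delta_i(d~_i) <= 0 and each data term delta_i(..) t_i is <= 0;
   - p_i(x,u) <= 0 on P, so each constraint term p_i s_i is <= 0.
   Hence 0 <= psi = s(x,u) - lam(f(x,u)) + lam(x) + (terms <= 0), which is the
   inequality. *)

Section PolynomialContinuity.
Variable R : realType.

Definition near_pt {k : nat} (x : 'I_k -> R) (d : R) (y : 'I_k -> R) : Prop :=
  forall i, `|y i - x i| < d.

Definition contp {k : nat} (F : ('I_k -> R) -> R) : Prop :=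
  forall x (e : R), 0 < e -> exists2 d : R, 0 < d &
    forall y, near_pt x d y -> `|F y - F x| < e.

Lemma near_pt_min k (x y : 'I_k -> R) d1 d2 :
  near_pt x (Num.min d1 d2) y -> near_pt x d1 y /\ near_pt x d2 y.
Proof. by move=> H; split=> i; have := H i; rewrite lt_min => /andP[]. Qed.

Lemma contp_common {k : nat} (x : 'I_k -> R) {F G : ('I_k -> R) -> R} {e1 e2 : R} :
  contp F -> contp G -> 0 < e1 -> 0 < e2 ->
  exists2 d : R, 0 < d & forall y, near_pt x d y ->
    `|F y - F x| < e1 /\ `|G y - G x| < e2.
Proof.
move=> cF cG e1_gt0 e2_gt0.
have [d1 d1_gt0 H1] := cF x _ e1_gt0; have [d2 d2_gt0 H2] := cG x _ e2_gt0.
exists (Num.min d1 d2); first by rewrite lt_min d1_gt0 d2_gt0.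
by move=> y /near_pt_min[/H1 ? /H2 ?].
Qed.

Lemma contC k (a : R) : contp (fun _ : 'I_k -> R => a).
Proof. by move=> x e e_gt0; exists 1 => // y _; rewrite subrr normr0. Qed.

Lemma contX k (i : 'I_k) : contp (fun x => x i).
Proof. by move=> x e e_gt0; exists e. Qed.

Lemma contE {k : nat} {F G : ('I_k -> R) -> R} : F =1 G -> contp F -> contp G.
Proof.
move=> FG cF x e e_gt0; have [d d_gt0 H] := cF x e e_gt0.
by exists d => // y /H; rewrite !FG.
Qed.

Lemma contD k (F G : ('I_k -> R) -> R) :
  contp F -> contp G -> contp (fun x => F x + G x).
Proof.
move=> cF cG x e e_gt0.
have e2_gt0 : 0 < e / 2 by rewrite divr_gt0.
have [d d_gt0 H] := contp_common x cF cG e2_gt0 e2_gt0.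
exists d => // y /H[hF hG].
rewrite opprD addrACA; apply: (le_lt_trans (ler_normD _ _)); lra.
Qed.

(* Product rule: |FG(y) - FG(x)| <= |F y| |G y - G x| + |F y - F x| |G x|,
   where |F y| <= |F x| + 1 once F is within 1 of F x. *)
Lemma contM k (F G : ('I_k -> R) -> R) :
  contp F -> contp G -> contp (fun x => F x * G x).
Proof.
move=> cF cG x e e_gt0.
set a := `|F x|; set b := `|G x|.
have a_ge0 : 0 <= a by rewrite normr_ge0.
have b_ge0 : 0 <= b by rewrite normr_ge0.
set eF := Num.min 1 (e / (2 * (b + 1))); set eG := e / (2 * (a + 1)).
have eF_gt0 : 0 < eF by rewrite lt_min ltr01 /= divr_gt0 // mulr_gt0 //; lra.
have eG_gt0 : 0 < eG by rewrite divr_gt0 // mulr_gt0 //; lra.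
have [d d_gt0 H] := contp_common x cF cG eF_gt0 eG_gt0.
exists d => // y /H[hF hG].
have Fy_le : `|F y| <= a + 1.
  have : `|F y| <= `|F y - F x| + a by rewrite -{1}(subrK (F x) (F y)) ler_normD.
  have : eF <= 1 by rewrite ge_min lexx.
  lra.
have eF_le : eF <= e / (2 * (b + 1)) by rewrite ge_min lexx orbT.
have termG : `|F y| * `|G y - G x| < e / 2.
  apply: (le_lt_trans (ler_wpM2r (normr_ge0 _) Fy_le)).
  have -> : e / 2 = (a + 1) * eG by rewrite /eG; field; lra.
  by rewrite ltr_pM2l //; lra.
have termF : `|F y - F x| * b <= e / 2.
  have -> : e / 2 = e / (2 * (b + 1)) * (b + 1) by field; lra.
  by apply: ler_pM; rewrite ?normr_ge0 //; [lra | lra].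
have -> : F y * G y - F x * G x = F y * (G y - G x) + (F y - F x) * G x by ring.
apply: (le_lt_trans (ler_normD _ _)); rewrite !normrM -/b; lra.
Qed.

Lemma contSum k (I : Type) (r : seq I) (F : I -> ('I_k -> R) -> R) :
  (forall i, contp (F i)) -> contp (fun x => \sum_(i <- r) F i x).
Proof.
move=> cF; elim: r => [|i r IH].
  by apply: (contE (F := fun _ => 0)); [move=> x; rewrite big_nil | exact: contC].
apply: (contE (F := fun x => F i x + \sum_(i <- r) F i x)).
  by move=> x; rewrite big_cons.
exact: contD.
Qed.

Lemma contProd k (I : Type) (r : seq I) (F : I -> ('I_k -> R) -> R) :
  (forall i, contp (F i)) -> contp (fun x => \prod_(i <- r) F i x).
Proof.
move=> cF; elim: r => [|i r IH].
  by apply: (contE (F := fun _ => 1)); [move=> x; rewrite big_nil | exact: contC].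
apply: (contE (F := fun x => F i x * \prod_(i <- r) F i x)).
  by move=> x; rewrite big_cons.
exact: contM.
Qed.

Lemma contXn k (F : ('I_k -> R) -> R) (j : nat) :
  contp F -> contp (fun x => F x ^+ j).
Proof.
move=> cF; elim: j => [|j IH]; first exact: contC.
apply: (contE (F := fun x => F x * F x ^+ j)); last exact: contM.
by move=> x; rewrite exprS.
Qed.

Lemma cont_meval k (p : {mpoly R[k]}) : contp (fun x => p.@[x]).
Proof.
apply: (contE (F := fun x => \sum_(mm <- msupp p) p@_mm * \prod_i x i ^+ mm i)).
  by move=> x; rewrite mevalE.
apply: contSum => mm; apply: contM; first exact: contC.
by apply: contProd => i; apply: contXn; exact: contX.
Qed.

End PolynomialContinuity.
Arguments cont_meval {R k}.

Lemma sos_ge0 {R : realType} {k : nat} {p : {mpoly R[k]}} (v : 'I_k -> R) :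
  sos p -> 0 <= p.@[v].
Proof.
move=> [qs ->]; rewrite rmorph_sum /=; apply: sumr_ge0 => q _.
by rewrite rmorphXn /= sqr_ge0.
Qed.

Lemma sos_mul_le0 (R : realType) k (q t : {mpoly R[k]}) v :
  q.@[v] <= 0 -> sos t -> (q * t).@[v] <= 0.
Proof. by move=> q_le0 /(sos_ge0 v) t_ge0; rewrite mevalM mulr_le0_ge0. Qed.

Lemma split_lshift (a b : nat) (i : 'I_a) : split (lshift b i) = inl i.
Proof. by rewrite -[lshift b i]/(unsplit (inl i)) unsplitK. Qed.

Lemma split_rshift (a b : nat) (i : 'I_b) : split (rshift a i) = inr i.
Proof. by rewrite -[rshift a i]/(unsplit (inr i)) unsplitK. Qed.

Section EvalAtTrueParameters.
Variables (R : realType) (n m l : nat).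
Variables (x : 'I_n -> R) (u : 'I_m -> R) (A : 'M[R]_(n, l)).

Definition xua : 'I_(n + m + n * l) -> R := fun k =>
  match split k with inl k' => xu x u k' | inr j => mxvec A 0 j end.

Lemma xua_Xvar i : (Xvar R m l i).@[xua] = x i.
Proof. by rewrite /Xvar mevalXU /xua split_lshift /xu split_lshift. Qed.

Lemma xua_Uvar j : (Uvar R n l j).@[xua] = u j.
Proof. by rewrite /Uvar mevalXU /xua split_lshift /xu split_rshift. Qed.

Lemma xua_Avar i j : (Avar R m i j).@[xua] = A i j.
Proof. by rewrite /Avar mevalXU /xua split_rshift mxvecE. Qed.

Lemma xua_lift_xu q : (lift_xu l q).@[xua] = q.@[xu x u].
Proof.
rewrite /lift_xu comp_mpoly_meval; apply: meval_eq => k.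
by rewrite tnth_mktuple /xu; case: (split k) => [i | j]; [exact: xua_Xvar | exact: xua_Uvar].
Qed.

Lemma xua_lift_x q : (lift_x m l q).@[xua] = q.@[x].
Proof.
rewrite /lift_x comp_mpoly_meval; apply: meval_eq => k.
by rewrite tnth_mktuple xua_Xvar.
Qed.

Lemma xua_Za (z : 'I_l -> {mpoly R[n + m]}) k :
  (tnth (Za z) k).@[xua] = \sum_(j < l) A k j * (z j).@[xu x u].
Proof.
rewrite tnth_mktuple rmorph_sum /=; apply: eq_bigr => j _.
by rewrite mevalM xua_lift_xu xua_Avar mulrC.
Qed.

Lemma xua_data_res (z : 'I_l -> {mpoly R[n + m]}) xp xt ut k :
  (tnth (data_res z xp xt ut) k).@[xua]
  = xp k - \sum_(j < l) A k j * (z j).@[xu xt ut].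
Proof.
rewrite tnth_mktuple mevalB mevalC rmorph_sum /=; congr (_ - _).
by apply: eq_bigr => j _; rewrite mevalM mevalC xua_Avar mulrC.
Qed.

End EvalAtTrueParameters.
Arguments xua {R n m l}.

Section Certificate.
Variables (R : realType) (n m l c D : nat).
Variables (f : 'I_n -> {mpoly R[n + m]}) (p : 'I_c -> {mpoly R[n + m]}).
Variables (z : 'I_l -> {mpoly R[n + m]}) (A : 'M[R]_(n, l)).
Variables (xp xt : 'I_D -> 'I_n -> R) (ut : 'I_D -> 'I_m -> R).
Variables (dt : 'I_D -> 'I_n -> R) (delta : 'I_D -> {mpoly R[n]}).
Variables (s : {mpoly R[n + m]}) (lam : {mpoly R[n]}).
Variables (si : 'I_c -> {mpoly R[n + m + n * l]}) (ti : 'I_D -> {mpoly R[n + m + n * l]}).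
Hypothesis f_Az : forall i, f i = \sum_(j < l) A i j *: z j.
Hypothesis xp_data : forall i k, xp i k = (f k).@[xu (xt i) (ut i)] + dt i k.
Hypothesis dt_noise : forall i, (delta i).@[dt i] <= 0.
Hypothesis si_sos : forall i, sos (si i).
Hypothesis ti_sos : forall i, sos (ti i).
Hypothesis psi_sos :
  sos (lift_xu l s - (lam \mPo Za z) + lift_x m l lam
       + \sum_(i < D) (delta i \mPo data_res z (xp i) (xt i) (ut i)) * ti i
       + \sum_(i < c) lift_xu l (p i) * si i).

Lemma f_eval x u k : (f k).@[xu x u] = \sum_(j < l) A k j * (z j).@[xu x u].
Proof. by rewrite f_Az rmorph_sum /=; apply: eq_bigr => j _; rewrite mevalZ. Qed.

(* At the true parameters, each data residual is the true noise d~_i. *)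
Lemma data_terms_le0 x u :
  \sum_(i < D) ((delta i \mPo data_res z (xp i) (xt i) (ut i)) * ti i).@[xua x u A]
  <= 0.
Proof.
apply: sumr_le0 => i _.
have residual_is_noise k :
    (tnth (data_res z (xp i) (xt i) (ut i)) k).@[xua x u A] = dt i k.
  by rewrite xua_data_res xp_data f_eval addrAC subrr add0r.
by apply: sos_mul_le0 (ti_sos i); rewrite comp_mpoly_meval (meval_eq _ residual_is_noise).
Qed.

Lemma constraint_terms_le0 x u : (forall i, (p i).@[xu x u] <= 0) ->
  \sum_(i < c) (lift_xu l (p i) * si i).@[xua x u A] <= 0.
Proof.
move=> x_u_in_P; apply: sumr_le0 => i _.
by apply: sos_mul_le0 (si_sos i); rewrite xua_lift_xu.
Qed.

(* psi(x, u, vec(A^T)) >= 0 is the dissipation inequality up to the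
   nonpositive data and constraint terms. *)
Lemma certificate_dissipation x u : (forall i, (p i).@[xu x u] <= 0) ->
  lam.@[fun k => (f k).@[xu x u]] - lam.@[x] <= s.@[xu x u].
Proof.
move=> x_u_in_P; set v := xua x u A.
have lam_Za : (lam \mPo Za z).@[v] = lam.@[fun k => (f k).@[xu x u]].
  by rewrite comp_mpoly_meval; apply: meval_eq => k; rewrite xua_Za f_eval.
have := sos_ge0 v psi_sos.
rewrite !mevalD ?mevalB ?mevalN xua_lift_xu xua_lift_x lam_Za !rmorph_sum /=.
move: (data_terms_le0 x u) (@constraint_terms_le0 x u x_u_in_P).
set data_terms := \sum_(i < D) _; set constr_terms := \sum_(i < c) _.
set lam_fxu := lam.@[_]; set lam_x := lam.@[x]; set supply := s.@[_].
clearbody data_terms constr_terms lam_fxu lam_x supply.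
lra.
Qed.

End Certificate.
Arguments certificate_dissipation {R n m l c D f p z A xp xt ut dt delta s lam si ti}.

Theorem theorem1 (R : realType) (n m l c D : nat)
  (f : 'I_n -> {mpoly R[n + m]})
  (p : 'I_c -> {mpoly R[n + m]})
  (z : 'I_l -> {mpoly R[n + m]})
  (A : 'M[R]_(n, l))
  (xp xt : 'I_D -> 'I_n -> R) (ut : 'I_D -> 'I_m -> R) (dt : 'I_D -> 'I_n -> R)
  (delta : 'I_D -> {mpoly R[n]})
  (s : {mpoly R[n + m]})
  (lam : {mpoly R[n]})
  (si : 'I_c -> {mpoly R[n + m + n * l]})
  (ti : 'I_D -> {mpoly R[n + m + n * l]}) :
  (* P is nonempty *)
  (exists (x : 'I_n -> R) (u : 'I_m -> R), forall i, (p i).@[xu x u] <= 0) ->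
  (* f = A z *)
  (forall i, f i = \sum_(j < l) A i j *: z j) ->
  (* data *)
  (forall i k, xp i k = (f k).@[xu (xt i) (ut i)] + dt i k) ->
  (forall i, (delta i).@[dt i] <= 0) ->
  (* each D_i^SB is bounded *)
  (forall i, exists M : R, forall d : 'I_n -> R,
      (delta i).@[d] <= 0 -> forall k, `|d k| <= M) ->
  (* SOS multipliers *)
  sos lam -> (forall i, sos (si i)) -> (forall i, sos (ti i)) ->
  sos (@lift_xu R n m l s - (lam \mPo @Za R n m l z) + @lift_x R n m l lam
       + \sum_(i < D) (delta i \mPo @data_res R n m l z (xp i) (xt i) (ut i)) * ti i
       + \sum_(i < c) @lift_xu R n m l (p i) * si i) ->
  dissipative (fun x u k => (f k).@[xu x u])
              (fun x u => forall i, (p i).@[xu x u] <= 0)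
              (fun x u => s.@[xu x u]).
Proof.
move=> _ f_Az xp_data dt_noise _ lam_sos si_sos ti_sos psi_sos.
exists (fun x => lam.@[x]); split.
- move=> x _ e /(cont_meval lam x)[d d_gt0 H].
  by exists d => // y _ /H.
- by move=> x _; exact: sos_ge0.
- by move=> x u; exact: (certificate_dissipation f_Az xp_data dt_noise si_sos ti_sos psi_sos).
Qed.
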